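(* Suppose that in a spherical tiling by angle congruent pentagons some angle value $\theta$ appears at every degree $3$ vertex. Then $\theta$ appears at least twice among the five angles of the pentagon.
   Context: A spherical tiling by angle congruent pentagons is a graph embedded in the sphere whose faces (tiles) are all pentagons, the tiling being edge-to-edge with every vertex of degree at least $3$; each corner of each tile carries a positive real angle, the angles at every vertex sum to $2\pi$, and all tiles have the same multiset of five corner angles (the ''pentagon''). An angle value $\theta$ appears at a vertex if some corner at that vertex has angle $\theta$; it appears $k$ times in the pentagon if it has multiplicity $k$ in that multiset. *)

From mathcomp Require Import all_boot.
From Stdlib Require Import Reals List Permutation.

Set Implicit Arguments.
Unset Strict Implicit.
Unset Printing Implicit Defensive.

(* A map on the sphere, presented as a combinatorial map (rotation system).
   D = darts (half-edges); [alpha] = the edge involution (fixed-point free);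
   [sigma] = rotation around vertices (a permutation); faces are the orbits
   of [face_perm alpha sigma := alpha \o sigma].
   Vertices = sigma-orbits, edges = alpha-orbits, faces = phi-orbits.
   Each dart d also represents the corner at the vertex of d between d and
   sigma d; with the convention phi = alpha \o sigma, the five corners of a
   face are exactly the darts of the corresponding phi-orbit, and the corners
   at a vertex are exactly the darts of the corresponding sigma-orbit. *)

Definition face_perm (D : finType) (alpha sigma : D -> D) : D -> D :=
  fun d => alpha (sigma d).

Definition adj (D : finType) (alpha sigma : D -> D) : rel D :=
  [rel x y | (y == alpha x) || (y == sigma x)].

Definition n_orbits (D : finType) (f : D -> D) : nat := fcard f (@predT D).

Definition spherical_pentagonal_tiling (D : finType) (alpha sigma : D -> D)
  : Prop :=
  (forall d, alpha d != d) /\ (forall d, alpha (alpha d) = d) /\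
  injective sigma /\
      (forall x y, connect (adj alpha sigma) x y) /\
      (* embedded in the sphere: Euler characteristic V - E + F = 2 *)
      (n_orbits sigma + n_orbits (face_perm alpha sigma)
         = n_orbits alpha + 2)%N /\
      (forall d, order (face_perm alpha sigma) d = 5%N) /\
      (forall d, 3 <= order sigma d)%N.

Definition vertex_angle_sum (D : finType) (sigma : D -> D) (ang : D -> R)
  (d : D) : R :=
  \big[Rplus/R0]_(d' | fconnect sigma d d') ang d'.

(* Angle congruent tiling with pentagon P (a list of 5 angle values taken
   up to permutation, i.e. a multiset). *)
Definition angle_congruent (D : finType) (alpha sigma : D -> D)
  (ang : D -> R) (P : list R) : Prop :=
  [/\ (forall d, Rlt R0 (ang d)),
      (forall d, vertex_angle_sum sigma ang d = Rmult 2 PI)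
    & (forall d, Permutation (map ang (orbit (face_perm alpha sigma) d)) P)].

Definition mult (P : list R) (x : R) : nat := count_occ Req_EM_T P x.

Definition appears_at (D : finType) (sigma : D -> D) (ang : D -> R)
  (theta : R) (d : D) : Prop :=
  exists d', fconnect sigma d d' /\ ang d' = theta.

From mathcomp Require Import all_boot.
From Stdlib Require Import Reals List Permutation.
From mathcomp Require Import zify.

(* Proof idea (double counting plus Euler's formula).  Let V, E, F be the
   numbers of vertices, edges and faces, N the number of darts (= corners),
   V3 the number of degree-3 vertices and m the multiplicity of theta in the
   pentagon.  Since every face is a pentagon and every edge has two darts,
   N = 5F = 2E; since every vertex has degree >= 3, N >= 4V - V3.  Euler's
   formula V - E + F = 2 then gives V3 >= F + 8.  Every degree-3 vertex has
   a corner of angle theta, and distinct vertices have disjoint corners, so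
   the number T of theta-corners satisfies T >= V3; but every face carries
   exactly m such corners, so T = mF. *)

Section OrbitCounting.

Context {D : finType} {f : D -> D}.
Hypothesis f_inj : injective f.

Lemma n_orbitsE : n_orbits f = #|froots f|.
Proof. by apply: eq_card => x; rewrite !inE andbT. Qed.

Lemma card_by_orbits (A : pred D) :
  #|A| = \sum_(r | froots f r) #|[pred x | A x & fconnect f r x]|.
Proof.
rewrite -sum1_card (partition_big (froot f) (froots f)) /=; last first.
  by move=> x _; apply: (roots_root (fconnect_sym f_inj)).
apply: eq_bigr => r /eqP root_r; rewrite sum1_card; apply: eq_card => x.
by rewrite -topredE /= !inE -{1}root_r eq_sym (root_connect (fconnect_sym f_inj)).
Qed.

Lemma card_sum_orders : #|D| = \sum_(r | froots f r) order f r.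
Proof.
transitivity #|@predT D|; first exact: eq_card.
rewrite card_by_orbits; apply: eq_bigr => r _; apply: eq_card => x.
by rewrite !inE.
Qed.

Lemma n_orbits_const_order {n} :
  (forall x, order f x = n) -> (n_orbits f * n = #|D|)%N.
Proof.
move=> ord_n; rewrite /n_orbits (fcard_order_set f_inj (n := n)) ?cardT //.
by apply/subsetP => x _; rewrite inE ord_n.
Qed.

Lemma n_orbits_degree_bound :
  (forall x, 3 <= order f x)%N ->
  (4 * n_orbits f <= #|D| + #|[pred r | froots f r & order f r == 3]|)%N.
Proof.
move=> ord_ge3; rewrite card_sum_orders n_orbitsE.
have -> : #|[pred r | froots f r & order f r == 3]|
          = \sum_(r | froots f r) (order f r == 3 : nat).
  by rewrite -sum1_card big_mkcondr /=; apply: eq_bigr => r _; case: (_ == 3).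
rewrite -big_split /= -sum1_card big_distrr /=.
by apply: leq_sum => r _; have := ord_ge3 r; case: eqP => [->|]; lia.
Qed.

(* Orbits selected by Q that each meet A inject into A. *)
Lemma card_orbits_meeting {Q A : pred D} :
  (forall r, froots f r -> Q r -> exists2 d, fconnect f r d & A d) ->
  (#|[pred r | froots f r & Q r]| <= #|A|)%N.
Proof.
move=> meet; set pick_in := fun r => odflt r [pick d | fconnect f r d && A d].
have pickP_in r : froots f r -> Q r -> fconnect f r (pick_in r) && A (pick_in r).
  move=> root_r Qr; have [d conn_d Ad] := meet r root_r Qr.
  by rewrite /pick_in; case: pickP => [//|/(_ d)]; rewrite conn_d Ad.
have pick_inj : {in [pred r | froots f r & Q r] &, injective pick_in}.
  move=> r1 r2; rewrite !inE => /andP[root1 Q1] /andP[root2 Q2] same.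
  have /andP[c1 _] := pickP_in _ root1 Q1; have /andP[c2 _] := pickP_in _ root2 Q2.
  rewrite -(eqP root1) -(eqP root2); apply/eqP.
  rewrite (root_connect (fconnect_sym f_inj)) (connect_trans c1) //.
  by rewrite same (fconnect_sym f_inj).
rewrite -(card_in_image pick_inj).
apply/subset_leq_card/subsetP => y /imageP [r]; rewrite inE => /andP[root_r Qr] ->.
by have /andP[_ A_y] := pickP_in _ root_r Qr.
Qed.

Lemma card_value_orbits {g : D -> R} {P : list R} (x : R) :
  (forall d, Permutation (List.map g (orbit f d)) P) ->
  #|[pred d | if Req_EM_T (g d) x then true else false]|
    = (n_orbits f * mult P x)%N.
Proof.
move=> perm_P; rewrite card_by_orbits n_orbitsE -sum_nat_const.
apply: eq_bigr => r _.
rewrite /mult -(proj1 (Permutation_count_occ Req_EM_T _ _) (perm_P r) x).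
have -> : count_occ Req_EM_T (List.map g (orbit f r)) x
          = count (fun d => if Req_EM_T (g d) x then true else false) (orbit f r).
  by elim: (orbit f r) => //= a s ->; case: Req_EM_T.
rewrite -size_filter -(card_uniqP (filter_uniq _ (orbit_uniq f r))).
by apply: eq_card => y; rewrite !inE mem_filter -fconnect_orbit.
Qed.

End OrbitCounting.

Lemma order_involution {D : finType} {alpha : D -> D} :
  (forall d, alpha d != d) -> (forall d, alpha (alpha d) = d) ->
  forall d, order alpha d = 2%N.
Proof.
move=> no_fix invol d.
have cyc : fcycle alpha [:: d; alpha d] by rewrite /= invol !eqxx.
have uniq_d : uniq [:: d; alpha d] by rewrite /= inE andbT eq_sym no_fix.
by rewrite (order_cycle cyc uniq_d) // inE eqxx.
Qed.

Lemma pentagon_count_arith {V E F N V3 T m : nat} :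
  (V + F = E + 2)%N -> (F * 5 = N)%N -> (E * 2 = N)%N ->
  (4 * V <= N + V3)%N -> T = (F * m)%N -> (V3 <= T)%N -> (2 <= m)%N.
Proof.
move=> euler faces edges degrees T_def V3_le_T.
have F_lt_T : (F < T)%N by lia.
by move: F_lt_T; rewrite T_def; nia.
Qed.

Theorem lemma3 (D : finType) (alpha sigma : D -> D) (ang : D -> R)
  (P : list R) (theta : R) :
  spherical_pentagonal_tiling alpha sigma ->
  angle_congruent alpha sigma ang P ->
  (forall d, order sigma d = 3%N -> appears_at sigma ang theta d) ->
  (2 <= mult P theta)%N.
Proof.
move=> [no_fix [invol [sigma_inj [_ [euler [pentagons deg_ge3]]]]]] [_ _ faces_P].
move=> deg3_theta.
have alpha_inj : injective alpha := can_inj invol.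
have phi_inj : injective (face_perm alpha sigma).
  by move=> x y /alpha_inj /sigma_inj.
apply: (pentagon_count_arith euler
  (n_orbits_const_order phi_inj pentagons)
  (n_orbits_const_order alpha_inj (order_involution no_fix invol))
  (n_orbits_degree_bound sigma_inj deg_ge3)
  (card_value_orbits phi_inj theta faces_P)).
apply: (card_orbits_meeting sigma_inj (Q := fun r => order sigma r == 3)
  (A := fun d => if Req_EM_T (ang d) theta then true else false)).
move=> r _ /eqP /deg3_theta [d [conn_d ang_d]].
by exists d; last by case: Req_EM_T.
Qed.
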